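(* Every monotonically normal, $nwd$-separable space is $D$-separable.
   Context: A space is $nwd$-separable if it has a dense subset which is a countable union of nowhere dense sets. A space $X$ is $D$-separable if for every sequence $\{D_n:n<\omega\}$ of dense subsets of $X$ there are discrete sets $E_n\subseteq D_n$ with $\bigcup_{n<\omega}E_n$ dense in $X$. *)

From HB Require Import structures.
From mathcomp Require Import all_boot all_order.
From mathcomp Require Import all_classical all_reals all_analysis.

Set Implicit Arguments.
Unset Strict Implicit.
Unset Printing Implicit Defensive.

Local Open Scope classical_set_scope.

Definition nowhere_dense {T : topologicalType} (N : set T) : Prop :=
  interior (closure N) = set0.

Definition discrete_set {T : topologicalType} (E : set T) : Prop :=
  forall x, E x -> exists U : set T, [/\ open U, U x & U `&` E = [set x]].

Definition monotonically_normal (T : topologicalType) : Prop :=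
  @accessible_space T /\
  exists G : set T -> set T -> set T,
    (forall A B, closed A -> closed B -> A `&` B = set0 ->
       [/\ open (G A B), A `<=` G A B & closure (G A B) `<=` ~` B]) /\
    (forall A B A' B', closed A -> closed B -> A `&` B = set0 ->
       closed A' -> closed B' -> A' `&` B' = set0 ->
       A `<=` A' -> B' `<=` B -> G A B `<=` G A' B').

Definition nwd_separable (T : topologicalType) : Prop :=
  exists N : nat -> set T,
    (forall n, nowhere_dense (N n)) /\ dense (\bigcup_n N n).

Definition D_separable (T : topologicalType) : Prop :=
  forall D : nat -> set T, (forall n, dense (D n)) ->
    exists E : nat -> set T,
      (forall n, E n `<=` D n /\ discrete_set (E n)) /\
      dense (\bigcup_n E n).

From mathcomp Require Import all_boot all_order.
From mathcomp Require Import all_classical all_reals all_analysis.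

Local Open Scope classical_set_scope.

(* Monotone normality yields Borges' point operator: open sets H x U with
   x \in H x U <= U such that H x U and H y V meet only if x \in V or y \in U.
   Given a nowhere dense N and a dense D, pick a maximal pairwise disjoint
   family of sets H d U with d \in D and U <= X \ cl N.  Each H d U isolates d
   among the chosen points, so these points form a discrete subset of D, and
   maximality together with the point operator puts every point of N in their
   closure.  Doing this for each N_n and D_n gives D-separability. *)

Section dense_sets.
Context {T : topologicalType}.

Lemma closure_dense (S : set T) : dense S -> closure S = setT.
Proof.
move=> dS; apply/seteqP; split => // x _ B.
rewrite nbhsE /= => -[V [oV Vx] VB].
have [y [Vy Sy]] := dS V (ex_intro _ x Vx) oV.
by exists y; split => //; exact: VB.
Qed.

Lemma dense_sub_closure (A B : set T) : dense A -> A `<=` closure B -> dense B.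
Proof.
move=> dA AB V V0 oV; have [a [Va Aa]] := dA V V0 oV.
have [b [Bb Vb]] := AB a Aa V (open_nbhs_nbhs (conj oV Va)).
by exists b.
Qed.

Lemma nowhere_dense_closureC (N : set T) : nowhere_dense N -> dense (~` closure N).
Proof.
move=> nN V [x Vx] oV; apply/set0P/eqP => /subsets_disjoint.
by rewrite (open_subsetE _ oV) nN => /(_ x Vx).
Qed.

End dense_sets.

Definition mn_point_operator {T : topologicalType} (H : T -> set T -> set T) :=
  (forall x U, open U -> U x -> [/\ open (H x U), H x U x & H x U `<=` U]) /\
  (forall x U y V, open U -> U x -> open V -> V y ->
     H x U `&` H y V !=set0 -> V x \/ U y).

Section monotonically_normal_point_operator.
Context {T : topologicalType}.
Hypothesis closed1 : forall x : T, closed [set x].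
Variable G : set T -> set T -> set T.
Hypothesis G_separates : forall A B, closed A -> closed B -> A `&` B = set0 ->
  [/\ open (G A B), A `<=` G A B & closure (G A B) `<=` ~` B].
Hypothesis G_monotone : forall A B A' B', closed A -> closed B -> A `&` B = set0 ->
  closed A' -> closed B' -> A' `&` B' = set0 ->
  A `<=` A' -> B' `<=` B -> G A B `<=` G A' B'.

Let set1_setC_disjoint {x : T} {U} : U x -> [set x] `&` ~` U = set0.
Proof. by move=> Ux; apply/subsets_disjoint => _ ->. Qed.

Let setC_set1_disjoint {x : T} {U} : U x -> ~` U `&` [set x] = set0.
Proof. by move=> Ux; rewrite setIC set1_setC_disjoint. Qed.

Definition mn_point_nbhs x U := G [set x] (~` U) `&` ~` closure (G (~` U) [set x]).

Lemma mn_point_nbhs_operator : mn_point_operator mn_point_nbhs.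
Proof.
split=> [x U oU Ux|x U y V oU Ux oV Vy [p [[_ Hp] [Gp _]]]].
  have [oG xG clG] := G_separates _ _ (closed1 x) (open_closedC oU) (set1_setC_disjoint Ux).
  have [_ _ clG'] := G_separates _ _ (open_closedC oU) (closed1 x) (setC_set1_disjoint Ux).
  split; first exact/openI/closed_openC/closed_closure.
    by split; [exact: xG | move=> /clG'; apply].
  by move=> z [Gz _]; apply: contrapT => nUz; exact: clG z (subset_closure Gz) nUz.
apply: contrapT => /not_orP[nVx nUy]; apply/Hp/subset_closure.
have xy : [set y] `&` [set x] = set0.
  by apply/disjoints_subset => _ -> yx; apply: nVx; rewrite -yx.
(* With x \notin V and y \notin U, monotonicity puts G {y} (X \ V) inside G (X \ U) {x}. *)
have Gyx : G [set y] (~` V) `<=` G [set y] [set x].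
  by apply: G_monotone => //; [exact: open_closedC | exact: set1_setC_disjoint | move=> _ ->].
have Gux : G [set y] [set x] `<=` G (~` U) [set x].
  by apply: G_monotone => //; [exact: open_closedC | exact: setC_set1_disjoint | move=> _ ->].
exact/Gux/Gyx.
Qed.

End monotonically_normal_point_operator.

Lemma monotonically_normal_point_operator (T : topologicalType) :
  monotonically_normal T -> exists H : T -> set T -> set T, mn_point_operator H.
Proof.
move=> [T1 [G [Gsep Gmono]]]; exists (mn_point_nbhs G).
exact: mn_point_nbhs_operator (accessible_closed_set1 T1) _ Gsep Gmono.
Qed.

Definition admissible_pairs {T : topologicalType} (W D : set T) :=
  [set p : T * set T | [/\ D p.1, open p.2, p.2 p.1 & p.2 `<=` W]].

Section maximal_family.
Context {T : topologicalType} {H : T -> set T -> set T}.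
Hypothesis HP : mn_point_operator H.
Context {W D : set T}.
Hypothesis oW : open W.

Context {A : set (T * set T)}.
Hypothesis maxA :
  maximal_disjoint_subcollection (fun p => H p.1 p.2) A (admissible_pairs W D).

Let H_open {x U} : open U -> U x -> open (H x U).
Proof. by move=> oU Ux; case: (HP.1 x U oU Ux). Qed.

Let H_self {x U} : open U -> U x -> H x U x.
Proof. by move=> oU Ux; case: (HP.1 x U oU Ux). Qed.

Let H_sub {x U} : open U -> U x -> H x U `<=` U.
Proof. by move=> oU Ux; case: (HP.1 x U oU Ux). Qed.

Lemma maximal_family_discrete : discrete_set (fst @` A).
Proof.
have [AP trA _] := maxA.
move=> _ [p Ap <-]; have [_ op2 p21 _] := AP p Ap.
exists (H p.1 p.2); split; [exact: H_open | exact: H_self |].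
apply/seteqP; split=> [z [Hz [q Aq qz]]|z /= ->]; last by split; [exact: H_self | exists p].
have [_ oq2 q21 _] := AP q Aq.
have -> : p = q by apply: trA => //; exists z; split => //; rewrite -qz; exact: H_self.
by rewrite /= qz.
Qed.

Lemma maximal_family_closure x : ~ W x -> closure (W `&` D) x -> closure (fst @` A) x.
Proof.
have [AP trA Amax] := maxA.
move=> nWx clx B; rewrite nbhsE /= => -[U [oU Ux] UB].
have [[q [Aq Hxq]]|noq] := pselect (exists q, A q /\ H x U `&` H q.1 q.2 !=set0).
  have [_ oq2 q21 q2W] := AP q Aq.
  have [/q2W //|Uq] := HP.2 x U q.1 q.2 oU Ux oq2 q21 Hxq.
  by exists q.1; split; [exists q | exact: UB].
exfalso.
have [d [[Wd Dd] Hd]] := clx _ (open_nbhs_nbhs (conj (H_open oU Ux) (H_self oU Ux))).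
pose Q := H x U `&` W.
have oQ : open Q by apply: openI => //; exact: H_open.
have HdQ : H d Q `<=` H x U by move=> z /(H_sub oQ (conj Hd Wd)) [].
have meets_d z : A z -> H z.1 z.2 `&` H d Q !=set0 -> False.
  move=> Az [w [wz wd]]; apply: noq; exists z; split => //.
  by exists w; split => //; exact: HdQ.
(* Adding the admissible pair (d, Q) would keep the family disjoint. *)
apply: (Amax (A `|` [set (d, Q)])).
- split=> [z|]; first by left.
  move=> /(_ (d, Q) (or_intror erefl)) AdQ; apply: (meets_d _ AdQ).
  by exists d; split; exact: H_self (conj Hd Wd).
- by move=> z [/AP //|/= ->]; split => //= w [].
- move=> i j [Ai|/= ->] [Aj|/= ->] hij; first exact: trA.
  + by case: (meets_d i Ai hij).
  + by case: (meets_d j Aj); rewrite setIC.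
  + by [].
Qed.

End maximal_family.

Lemma nowhere_dense_sub_closure_discrete {T : topologicalType}
    {H : T -> set T -> set T} {N D : set T} :
  mn_point_operator H -> nowhere_dense N -> dense D ->
  exists2 E, E `<=` D /\ discrete_set E & N `<=` closure E.
Proof.
move=> HP nN dD; pose W := ~` closure N.
have oW : open W by exact/closed_openC/closed_closure.
have [A maxA] := ex_maximal_disjoint_subcollection (fun p => H p.1 p.2)
  (admissible_pairs W D).
have [AP _ _] := maxA.
exists (fst @` A); first split.
- by move=> _ [p Ap <-]; have [+ _ _ _] := AP p Ap.
- exact: (maximal_family_discrete HP maxA).
move=> x Nx; apply: (maximal_family_closure HP oW maxA x).
  by apply; exact: subset_closure.
by rewrite closure_dense //; apply: denseI => //; exact: nowhere_dense_closureC.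
Qed.

Theorem theorem6p7 (T : topologicalType) :
  monotonically_normal T -> nwd_separable T -> D_separable T.
Proof.
move=> /monotonically_normal_point_operator [H HP] [N [nN dN]] D dD.
have /choice [E hE] : forall n, exists E,
    (E `<=` D n /\ discrete_set E) /\ N n `<=` closure E.
  move=> n; have [E ED NE] := nowhere_dense_sub_closure_discrete HP (nN n) (dD n).
  by exists E.
exists E; split; first by move=> n; case: (hE n).
apply: (dense_sub_closure _ _ dN) => x [n _ Nx].
have En : E n `<=` \bigcup_n E n by move=> y Ey; exists n.
exact: (closureS En) x ((hE n).2 x Nx).
Qed.
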